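(* Let $k\ge1$ and $\sigma\in\mathcal P_{4k}\setminus\mathcal D_{4k}$. With the sets $D_1,\dots,D_4,O_1,O_2,O_3,O_{4,1},O_{4,2},O_5,O_6$ defined in the context, $$\mathrm{Ord}_1:=|D_1|+\tfrac35|D_2|+\tfrac35|D_3|+\tfrac15|D_4|+\tfrac65|O_1|+\tfrac12|O_2|+\tfrac3{10}|O_3|-\tfrac15|O_{4,1}|-\tfrac15|O_{4,2}|-\tfrac25|O_5|-\tfrac35|O_6|<\frac{6k}{5}.$$
   Context: $\mathcal P_{4k}$ is the set of permutations $\sigma$ of $\{1,\dots,4k\}$ with $\sigma_1<\sigma_3<\dots<\sigma_{4k-1}$ and $\sigma_{2\ell-1}<\sigma_{2\ell}$ for all $\ell$; $\mathcal D_{4k}=\{\sigma\in\mathcal P_{4k}:\lceil\sigma_{2\ell-1}/4\rceil=\lceil\sigma_{2\ell}/4\rceil\ \forall\ell\}$. For $\sigma\in\mathcal P_{4k}$ consider the $2k$ pairs $(i,j)=(\sigma_{2\ell-1},\sigma_{2\ell})$, $1\le\ell\le2k$ (so $i<j$). For an index $m$ let $r(m)\in\{1,2,3,4\}$ with $r(m)\equiv m\pmod 4$, and call $\lceil m/4\rceil$ its block. A pair $(i,j)$ with $\lceil i/4\rceil=\lceil j/4\rceil$ belongs to $D_1$ if $(r(i),r(j))=(1,2)$; to $D_2$ if $(r(i),r(j))\in\{(1,3),(1,4)\}$; to $D_3$ if $(r(i),r(j))\in\{(2,3),(2,4)\}$; to $D_4$ if $(r(i),r(j))=(3,4)$. A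 pair with $\lceil i/4\rceil<\lceil j/4\rceil$ belongs to $O_1$ if $(r(i),r(j))=(1,1)$; to $O_2$ if $\{r(i),r(j)\}=\{1,2\}$; to $O_3$ if one of $r(i),r(j)$ is $1$ and the other is $3$ or $4$; to $O_{4,1}$ if $(r(i),r(j))=(2,2)$; to $O_{4,2}$ if $(r(i),r(j))=(3,3)$; to $O_{5,1}$ if one of $r(i),r(j)$ is $2$ and the other is $3$ or $4$; to $O_{5,2}$ if $\{r(i),r(j)\}=\{3,4\}$; to $O_6$ if $(r(i),r(j))=(4,4)$. Set $O_5=O_{5,1}\cup O_{5,2}$. $|\cdot|$ denotes cardinality. *)

From mathcomp Require Import all_boot all_order all_algebra.
Set Implicit Arguments. Unset Strict Implicit. Unset Printing Implicit Defensive.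
Import Order.TTheory GRing.Theory Num.Theory.

(* A permutation sigma of {1,...,4k} is represented by the sequence
   s = [:: sigma_1; sigma_2; ...; sigma_{4k}], i.e. sigma_i = nth 0 s (i-1). *)

Definition sg (s : seq nat) (i : nat) : nat := nth 0 s i.-1.

Definition inP (k : nat) (s : seq nat) : Prop :=
  [/\ perm_eq s (iota 1 (4 * k)),
      (forall l, 1 <= l < 2 * k -> sg s (2 * l - 1) < sg s (2 * l + 1)) &
      (forall l, 1 <= l <= 2 * k -> sg s (2 * l - 1) < sg s (2 * l))].

Definition blk (m : nat) : nat := (m + 3) %/ 4.
(* r(m) in {1,2,3,4}, r(m) = m mod 4 *)
Definition rr (m : nat) : nat := ((m + 3) %% 4).+1.

Definition inD (k : nat) (s : seq nat) : Prop :=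
  inP k s /\ forall l, 1 <= l <= 2 * k -> blk (sg s (2 * l - 1)) = blk (sg s (2 * l)).

Definition pairs (k : nat) (s : seq nat) : seq (nat * nat) :=
  [seq (sg s (2 * l - 1), sg s (2 * l)) | l <- iota 1 (2 * k)].

Definition same_blk (p : nat * nat) : bool := blk p.1 == blk p.2.
Definition diff_blk (p : nat * nat) : bool := blk p.1 < blk p.2.
Definition rs (p : nat * nat) : nat * nat := (rr p.1, rr p.2).

Definition isD1 p := same_blk p && (rs p == (1, 2)).
Definition isD2 p := same_blk p && ((rs p == (1, 3)) || (rs p == (1, 4))).
Definition isD3 p := same_blk p && ((rs p == (2, 3)) || (rs p == (2, 4))).
Definition isD4 p := same_blk p && (rs p == (3, 4)).

Definition unord (a b : nat) (p : nat * nat) : bool :=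
  (rs p == (a, b)) || (rs p == (b, a)).

Definition isO1 p := diff_blk p && (rs p == (1, 1)).
Definition isO2 p := diff_blk p && unord 1 2 p.
Definition isO3 p := diff_blk p && (unord 1 3 p || unord 1 4 p).
Definition isO41 p := diff_blk p && (rs p == (2, 2)).
Definition isO42 p := diff_blk p && (rs p == (3, 3)).
Definition isO51 p := diff_blk p && (unord 2 3 p || unord 2 4 p).
Definition isO52 p := diff_blk p && unord 3 4 p.
Definition isO5 p := isO51 p || isO52 p.
Definition isO6 p := diff_blk p && (rs p == (4, 4)).

Definition card_of (P : pred (nat * nat)) (k : nat) (s : seq nat) : nat :=
  count P (pairs k s).

Local Open Scope ring_scope.

Definition Ord1 (k : nat) (s : seq nat) : rat :=
  (card_of isD1 k s)%:R + 3%:R / 5%:R * (card_of isD2 k s)%:R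
  + 3%:R / 5%:R * (card_of isD3 k s)%:R + 1 / 5%:R * (card_of isD4 k s)%:R
  + 6%:R / 5%:R * (card_of isO1 k s)%:R + 1 / 2%:R * (card_of isO2 k s)%:R
  + 3%:R / 10%:R * (card_of isO3 k s)%:R - 1 / 5%:R * (card_of isO41 k s)%:R
  - 1 / 5%:R * (card_of isO42 k s)%:R - 2%:R / 5%:R * (card_of isO5 k s)%:R
  - 3%:R / 5%:R * (card_of isO6 k s)%:R.

From mathcomp Require Import all_boot all_order all_algebra.
From mathcomp Require Import zify ring lra.
Set Implicit Arguments. Unset Strict Implicit. Unset Printing Implicit Defensive.
Import Order.TTheory GRing.Theory Num.Theory.
Local Open Scope ring_scope.

(* 10 Ord1 is a sum of per-pair weights.  Each weight is bounded by a
   per-element charge depending only on the residue (6, 0, -1, -1 for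
   residues 1, 2, 3, 4) plus, for a pair inside a block, a bonus depending on
   its two residues.  The charges add up to 4 per block, so to 4k in total,
   and the bonuses of the pairs inside one block add up to at most 8, with
   equality only if all four elements of the block are paired among
   themselves.  Since sigma is not in D, some block has an element paired
   outside it, so 10 Ord1 < 4k + 8k. *)

Lemma rr_range m : (0 < rr m <= 4)%N.
Proof. by rewrite /rr ltn_mod. Qed.

Lemma blk_rr m : (m + 4 = 4 * blk m + rr m)%N.
Proof. rewrite /blk /rr; have := divn_eq (m + 3) 4; lia. Qed.

Lemma blk_rr_inj x y : blk x = blk y -> rr x = rr y -> x = y.
Proof. have := blk_rr x; have := blk_rr y; lia. Qed.

Lemma rrDmul4 m k : rr (m + 4 * k) = rr m.
Proof. by rewrite /rr addnAC addnC mulnC modnMDl. Qed.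

Lemma blk_ltn_or_rr_ltn i j : (i < j)%N ->
  (blk i < blk j)%N \/ blk i = blk j /\ (rr i < rr j)%N.
Proof.
move=> ij; have := blk_rr i; have := blk_rr j.
have := rr_range i; have := rr_range j; lia.
Qed.

Lemma mem_iota_blk k m : (1 <= m <= 4 * k)%N -> blk m \in iota 1 k.
Proof.
rewrite mem_iota /blk => hm; apply/andP; split.
  by rewrite divn_gt0 //; lia.
by rewrite ltn_divLR //; lia.
Qed.

Arguments rr : simpl never.
Arguments blk : simpl never.

Definition pair_weight (p : nat * nat) : int :=
  10 * (isD1 p)%:Z + 6 * (isD2 p)%:Z + 6 * (isD3 p)%:Z + 2 * (isD4 p)%:Z
  + 12 * (isO1 p)%:Z + 5 * (isO2 p)%:Z + 3 * (isO3 p)%:Z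
  - 2 * (isO41 p)%:Z - 2 * (isO42 p)%:Z - 4 * (isO5 p)%:Z - 6 * (isO6 p)%:Z.

Lemma sum_pair_weight (L : seq (nat * nat)) : \sum_(p <- L) pair_weight p =
  10 * (count isD1 L)%:Z + 6 * (count isD2 L)%:Z + 6 * (count isD3 L)%:Z
  + 2 * (count isD4 L)%:Z + 12 * (count isO1 L)%:Z + 5 * (count isO2 L)%:Z
  + 3 * (count isO3 L)%:Z - 2 * (count isO41 L)%:Z - 2 * (count isO42 L)%:Z
  - 4 * (count isO5 L)%:Z - 6 * (count isO6 L)%:Z.
Proof.
by elim: L => [|p L IH]; rewrite ?big_nil // big_cons IH /pair_weight /= !PoszD; ring.
Qed.

Lemma Ord1_sum_pair_weight k s :
  Ord1 k s = (\sum_(p <- pairs k s) pair_weight p)%:~R / 10%:R.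
Proof.
rewrite sum_pair_weight /Ord1 /card_of !(intrD, intrN, intrM) !pmulrn.
by field.
Qed.

Definition residue_charge (r : nat) : int :=
  if r == 1%N then 6 else if r == 2%N then 0 else -1.

Definition block_bonus (a b : nat) : int :=
  match a, b with
  | 1, 2 | 3, 4 => 4
  | 1, 3 | 1, 4 => 1
  | 2, 3 | 2, 4 => 7
  | _, _ => 0
  end%N.

Definition pair_bonus (p : nat * nat) : int :=
  if same_blk p then block_bonus (rr p.1) (rr p.2) else 0.

Lemma pair_weight_le p : (p.1 < p.2)%N ->
  pair_weight p <= residue_charge (rr p.1) + residue_charge (rr p.2) + pair_bonus p.
Proof.
case: p => i j /= /blk_ltn_or_rr_ltn blk_rr_lt.
rewrite /pair_weight /pair_bonus /isD1 /isD2 /isD3 /isD4 /isO1 /isO2 /isO3.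
rewrite /isO41 /isO42 /isO5 /isO51 /isO52 /isO6 /unord /same_blk /diff_blk /rs.
rewrite -[(i, j).1]/i -[(i, j).2]/j.
move: blk_rr_lt (rr_range i) (rr_range j).
move: (rr i) (rr j) (blk i) (blk j) => a b c d [cd | [-> ab]].
- rewrite (ltn_eqF cd) cd.
  by case: a => [|[|[|[|[|a]]]]] //; case: b => [|[|[|[|[|b]]]]].
- rewrite eqxx ltnn; move: ab.
  by case: a => [|[|[|[|[|a]]]]] //; case: b => [|[|[|[|[|b]]]]].
Qed.

Definition coords (L : seq (nat * nat)) : seq nat :=
  flatten [seq [:: p.1; p.2] | p <- L].

Lemma coords_cons p L : coords (p :: L) = [:: p.1, p.2 & coords L].
Proof. by []. Qed.

Lemma coordsP L x : reflect (exists2 p, p \in L & x \in [:: p.1; p.2]) (x \in coords L).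
Proof.
apply: (iffP flattenP) => [[l /mapP [p pL ->]] | [p pL xp]]; first by exists p.
by exists [:: p.1; p.2]; rewrite // map_f.
Qed.

Lemma coords_map (f : nat -> nat) L :
  coords [seq (f p.1, f p.2) | p <- L] = map f (coords L).
Proof. by elim: L => [|p L IH] //=; rewrite -IH. Qed.

Lemma subseq_coords_filter P L : subseq (coords (filter P L)) (coords L).
Proof.
elim: L => [|p L IH] //; rewrite [filter _ _]/= coords_cons.
case: (P p); first by rewrite coords_cons /= !eqxx.
exact: subseq_trans IH (subseq_trans (subseq_cons _ _) (subseq_cons _ _)).
Qed.

Lemma big_coords (F : nat -> int) L :
  \sum_(p <- L) (F p.1 + F p.2) = \sum_(x <- coords L) F x.
Proof.
by elim: L => [|p L IH]; rewrite ?big_nil // big_cons IH coords_cons !big_cons addrA.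
Qed.

Lemma uniq_coords_pair_eq L p q x : uniq (coords L) -> p \in L -> q \in L ->
  x \in [:: p.1; p.2] -> x \in [:: q.1; q.2] -> p = q.
Proof.
elim: L => [|a L IH] //; rewrite coords_cons /= => /and3P[a1 a2 uL].
have notin_a : forall y, y \in [:: a.1; a.2] -> y \notin coords L.
  move=> y; rewrite !inE => /orP[]/eqP -> //.
  by apply: contra a1 => y_in; rewrite inE y_in orbT.
move=> + + xp xq; rewrite !in_cons => /orP[/eqP ep|pL] /orP[/eqP eq|qL]; subst => //.
- by move/negP: (notin_a x xp); case; apply/coordsP; exists q.
- by move/negP: (notin_a x xq); case; apply/coordsP; exists p.
- exact: IH.
Qed.

Lemma coords_pairs k s : size s = (4 * k)%N -> coords (pairs k s) = s.
Proof.
have pairs_shift n t : [seq (sg t (2 * l - 1), sg t (2 * l)) | l <- iota 1 n] =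
    [seq (nth 0 t l.*2, nth 0 t l.*2.+1) | l <- iota 0 n].
  rewrite -(addn0 1%N) iotaDl -map_comp; apply/eq_map => l /=.
  by rewrite /sg; congr (nth _ _ _, nth _ _ _); lia.
rewrite /pairs pairs_shift (_ : (4 * k = (2 * k).*2)%N); last lia.
elim: (2 * k)%N s => [|n IH] [|x [|y t]] //= [st].
by rewrite coords_cons -[in RHS](IH t st) -(addn0 1%N) iotaDl -map_comp.
Qed.

Lemma sum_residue_charge_iota k :
  \sum_(x <- iota 1 (4 * k)) residue_charge (rr x) = (4 * k)%N%:Z.
Proof.
elim: k => [|k IH]; first by rewrite big_nil.
rewrite (_ : (4 * k.+1 = 4 * k + 4)%N); last lia.
rewrite iotaD big_cat IH /= !big_cons big_nil -!addSn !rrDmul4.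
by rewrite [in RHS]PoszD.
Qed.

Lemma size_coords L : size (coords L) = (2 * size L)%N.
Proof. by elim: L => [|p L IH] //; rewrite coords_cons /= IH; lia. Qed.

Section BlockBonus.

Variable R : seq (nat * nat).
Hypothesis R_residues : {in R, forall q, [&& 0 < q.1, q.1 < q.2 & q.2 <= 4]%N}.

Lemma coords_sub_residues : {subset coords R <= iota 1 4}.
Proof.
move=> x /coordsP [q /R_residues]; rewrite mem_iota.
by case: q => a b /= ab; rewrite !inE => /orP[]/eqP ->; lia.
Qed.

Lemma block_bonus_le7 a b : block_bonus a b <= 7.
Proof. by case: a => [|[|[|[|a]]]]; case: b => [|[|[|[|[|b]]]]]. Qed.

Lemma sum_block_bonus_le7 : (size R <= 1)%N -> \sum_(q <- R) block_bonus q.1 q.2 <= 7.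
Proof. by case: R => [|q []] // _; rewrite ?big_nil ?big_seq1 ?block_bonus_le7. Qed.

(* Two disjoint pairs inside a block form one of its three perfect matchings,
   each scoring 8. *)
Lemma sum_block_bonus_le8 : uniq (coords R) -> \sum_(q <- R) block_bonus q.1 q.2 <= 8.
Proof.
move=> uR; have := uniq_leq_size uR coords_sub_residues.
rewrite size_coords size_iota => sizeR.
have [/sum_block_bonus_le7/le_trans-> //|] := leqP (size R) 1.
move=> size_gt1; have size2 : size R = 2%N by lia.
move: R_residues uR size2; case: R => [|[a b] [|[c d] []]] //= res.
move: (res (a, b) (mem_head _ _)) (res (c, d) (mem_last (a, b) [:: (c, d)])) => /= ab cd {res}.
rewrite !big_cons big_nil addr0 !inE => /and4P[/norP[_ /norP[ac ad]] /norP[bc bd] cd' _] _.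
move: ab cd ac ad bc bd cd'.
by case: a => [|[|[|[|[|a]]]]] //; case: b => [|[|[|[|[|b]]]]] //;
   case: c => [|[|[|[|[|c]]]]] //; case: d => [|[|[|[|[|d]]]]].
Qed.

Lemma sum_block_bonus_le7_notin z : (0 < z <= 4)%N -> uniq (z :: coords R) ->
  \sum_(q <- R) block_bonus q.1 q.2 <= 7.
Proof.
move=> z_range uzR; apply: sum_block_bonus_le7.
have sub : {subset z :: coords R <= iota 1 4}.
  move=> x; rewrite inE => /orP[/eqP ->|/coords_sub_residues //].
  by rewrite mem_iota; lia.
by have := uniq_leq_size uzR sub; rewrite /= size_coords; lia.
Qed.

End BlockBonus.

Lemma ltr_sum_seq (V : numDomainType) (I : eqType) (r : seq I) (F G : I -> V) i0 :
  uniq r -> i0 \in r -> {in r, forall i, F i <= G i} -> F i0 < G i0 ->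
  \sum_(i <- r) F i < \sum_(i <- r) G i.
Proof.
move=> ur i0r FG F_lt_G; rewrite !(bigD1_seq i0) //= ltr_leD //.
by rewrite big_seq_cond [leRHS]big_seq_cond ler_sum // => i /andP[/FG].
Qed.

Definition block_pairs (L : seq (nat * nat)) (b : nat) : seq (nat * nat) :=
  [seq (rr p.1, rr p.2) | p <- L & same_blk p && (blk p.1 == b)].

Lemma sum_pair_bonus_blocks k L : {in L, forall p, (1 <= p.1 <= 4 * k)%N} ->
  \sum_(p <- L) pair_bonus p =
  \sum_(b <- iota 1 k) \sum_(q <- block_pairs L b) block_bonus q.1 q.2.
Proof.
move=> L_range.
under [RHS]eq_bigr => b _ do rewrite big_map big_filter big_mkcond.
rewrite exchange_big /=; apply: eq_big_seq => p pL.
rewrite /pair_bonus; case: ifP => [same|_]; last by rewrite big1.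
rewrite (bigD1_seq (blk p.1)) ?iota_uniq ?mem_iota_blk ?L_range //= eqxx big1 ?addr0 //.
by move=> b /negbTE; rewrite eq_sym => ->.
Qed.

Section BlockPairs.

Variable L : seq (nat * nat).
Hypothesis L_lt : {in L, forall p, (p.1 < p.2)%N}.
Hypothesis L_uniq : uniq (coords L).

Lemma block_pairs_residues b :
  {in block_pairs L b, forall q, [&& 0 < q.1, q.1 < q.2 & q.2 <= 4]%N}.
Proof.
move=> q /mapP [[i j]]; rewrite mem_filter /same_blk /= => /andP[/andP[/eqP ij _] pL] ->.
have [|[_ ->]] := blk_ltn_or_rr_ltn (L_lt pL); first by rewrite ij ltnn.
by move: (rr_range i) (rr_range j) => /andP[-> _] /andP[_ ->].
Qed.

Lemma mem_coords_block_pairs b x :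
  x \in coords [seq p <- L | same_blk p && (blk p.1 == b)] ->
  exists2 p, p \in L & [/\ x \in [:: p.1; p.2], same_blk p & blk x = b].
Proof.
move=> /coordsP [p]; rewrite mem_filter => /andP[/andP[same /eqP pb] pL] xp.
exists p => //; split=> //; move: xp same; rewrite /same_blk !inE.
by case/orP=> /eqP -> // /eqP <-.
Qed.

Lemma uniq_coords_block_pairs b : uniq (coords (block_pairs L b)).
Proof.
rewrite coords_map map_inj_in_uniq.
  exact: subseq_uniq (subseq_coords_filter _ _) L_uniq.
move=> x y /mem_coords_block_pairs [_ _ [_ _ xb]].
by move=> /mem_coords_block_pairs [_ _ [_ _ yb]]; apply: blk_rr_inj; rewrite xb yb.
Qed.

(* p.1 is paired outside its block, so its residue is missing from that
   block's internal pairs. *)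
Lemma uniq_cross_residue_block_pairs p : p \in L -> ~~ same_blk p ->
  uniq (rr p.1 :: coords (block_pairs L (blk p.1))).
Proof.
move=> pL cross; rewrite /= uniq_coords_block_pairs andbT coords_map.
apply/mapP => -[x /mem_coords_block_pairs [q qL [xq same xb]] rrx].
have x_eq : x = p.1 by apply: blk_rr_inj.
have pq : p = q by apply: uniq_coords_pair_eq L_uniq pL qL _ xq; rewrite -x_eq !inE eqxx.
by move: cross; rewrite pq same.
Qed.

End BlockPairs.

Lemma sum_pair_bonus_lt k L p0 : {in L, forall p, (1 <= p.1 <= 4 * k)%N} ->
  {in L, forall p, (p.1 < p.2)%N} -> uniq (coords L) ->
  p0 \in L -> ~~ same_blk p0 ->
  \sum_(p <- L) pair_bonus p < (8 * k)%N%:Z.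
Proof.
move=> L_range L_lt L_uniq p0L cross.
have -> : (8 * k)%N%:Z = \sum_(b <- iota 1 k) 8.
  by rewrite big_const_seq count_predT size_iota iter_addr_0 pmulrn; lia.
rewrite (sum_pair_bonus_blocks L_range).
apply: (ltr_sum_seq (iota_uniq 1 k) (mem_iota_blk (L_range _ p0L))).
  move=> b _; apply: sum_block_bonus_le8.
    exact: block_pairs_residues.
  exact: uniq_coords_block_pairs.
apply: (le_lt_trans (sum_block_bonus_le7_notin _ (rr_range _) _)) => //.
  exact: block_pairs_residues.
exact: uniq_cross_residue_block_pairs.
Qed.

Lemma sum_pair_weight_lt k L : perm_eq (coords L) (iota 1 (4 * k)) ->
  {in L, forall p, (p.1 < p.2)%N} -> has (predC same_blk) L ->
  \sum_(p <- L) pair_weight p < (12 * k)%N%:Z.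
Proof.
move=> L_perm L_lt /hasP [p0 p0L cross].
have L_uniq : uniq (coords L) by rewrite (perm_uniq L_perm) iota_uniq.
have L_range : {in L, forall p, (1 <= p.1 <= 4 * k)%N}.
  move=> p pL; rewrite -mem_iota -(perm_mem L_perm).
  by apply/coordsP; exists p; rewrite // inE eqxx.
have charges : \sum_(p <- L) (residue_charge (rr p.1) + residue_charge (rr p.2))
    = (4 * k)%N%:Z.
  by rewrite (big_coords (residue_charge \o rr)) (perm_big _ L_perm) sum_residue_charge_iota.
have bonuses := sum_pair_bonus_lt L_range L_lt L_uniq p0L cross.
rewrite big_seq; apply: le_lt_trans (ler_sum _ (fun p pL => pair_weight_le (L_lt p pL))) _.
rewrite -big_seq big_split charges (_ : (12 * k = 4 * k + 8 * k)%N); last lia.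
by rewrite PoszD ltrD2l.
Qed.

Theorem lemma5p4 (k : nat) (s : seq nat) :
  (1 <= k)%N -> inP k s -> ~ inD k s ->
  Ord1 k s < (6 * k)%:R / 5%:R.
Proof.
move=> _ s_inP notD; case: (s_inP) => s_perm _ pair_lt.
have L_perm : perm_eq (coords (pairs k s)) (iota 1 (4 * k)).
  by rewrite coords_pairs // (perm_size s_perm) size_iota.
have L_lt : {in pairs k s, forall p, (p.1 < p.2)%N}.
  by move=> p /mapP [l]; rewrite mem_iota => l_range ->; apply: pair_lt; lia.
have cross : has (predC same_blk) (pairs k s).
  apply: contraT => /hasPn all_same; case: notD; split=> // l l_range.
  apply/eqP; move: (all_same (sg s (2 * l - 1), sg s (2 * l))); rewrite /= negbK.
  by apply; rewrite map_f // mem_iota; lia.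
have := sum_pair_weight_lt L_perm L_lt cross.
rewrite Ord1_sum_pair_weight -(ltr_int rat); move: (\sum_(p <- _) _) => S.
by rewrite -pmulrn !natrM; lra.
Qed.
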